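(* For every edge-set $F\subseteq E(H)$ with $|F|=\ell$, a tree embedding $(\mathcal T,\mathcal M,y)$ sampled from $\mathcal D$ is good for $F$ with probability at least $1/2$.
   Context: Standing setup. $G=(V,E)$ is an undirected graph with $n=|V|$, demand-pairs $(S_i,T_i)$, $i\in[q]$, of subsets of $V$. $\ell\ge1$ is an integer and $E_\ell\subseteq E$ an edge set such that in $(V,E_\ell)$ every $(S_i,T_i)$ is $\ell$-edge-connected. $x:E\to[0,1]$ satisfies $x_e=1$ for $e\in E_\ell$ and $\sum_{e\in\delta_G(X)}x_e\ge \ell+1$ for every $i\in[q]$ and every $X$ with $T_i\subseteq X\subseteq V\setminus S_i$ (here $\delta_G(X)$ is the set of edges of $G$ with exactly one endpoint in $X$; $x(F)=\sum_{e\in F}x_e$). $\beta\ge1$ is a real. $\mathsf{LARGE}=\{e: x_e\ge 1/(4\ell\beta)\}$, $\mathsf{SMALL}=E\setminus\mathsf{LARGE}$, and $H=(V,\mathsf{LARGE})$. Capacities: $\tilde x_e=1/(4\ell\beta)$ if $e\in\mathsf{LARGE}$; $\tilde x_e=0$ if $x_e<\frac{1}{2n^2}\cdot\frac1{4\ell\beta}$; $\tilde x_e=x_e$ otherwise. A tree embedding $(\mathcal T,\mathcal M,y)$ of $(G,\tilde x)$: $\mathcal T$ is a tree; $\mathcal M$ maps nodes of $\mathcal T$ to vertices of $G$ and is a bijection between leaves of $\mathcal T$ and $V$ (a vertex set of $G$ is identified with the corresponding leaf set); each tree edge $f=(u,v)$ is mapped to a path $\mathcal M(f)$ in $G$ between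 $\mathcal M(u)$ and $\mathcal M(v)$; $y(f)=\tilde x(\delta_G(X))$ where $(X,V\setminus X)$ is the leaf partition induced by $\mathcal T-f$. $\mathcal M^{-1}(e)=\{f: e\in\mathcal M(f)\}$, $\mathcal M^{-1}(F)=\bigcup_{e\in F}\mathcal M^{-1}(e)$, $\mathcal M(E')=\bigcup_{f\in E'}\mathcal M(f)$, $\mathsf{load}(e)=\sum_{f\in\mathcal M^{-1}(e)}y(f)$. $\mathcal D$ is a probability distribution over tree embeddings of $(G,\tilde x)$ with $\mathbb{E}_{\mathcal T\sim\mathcal D}[\mathsf{load}(e)]\le\beta\,\tilde x_e$ for every $e\in E$, and for every tree in its support and all disjoint $A,B\subseteq V$, the maximum $A$–$B$ flow in $\mathcal T$ under capacities $y$ is at least the maximum $A$–$B$ flow in $G$ under capacities $\tilde x$. A tree embedding $(\mathcal T,\mathcal M,y)$ is good for $F\subseteq E(H)$ if $y(\mathcal M^{-1}(F))=\sum_{f\in\mathcal M^{-1}(F)}y(f)\le1/2$. *)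

From HB Require Import structures.
From mathcomp Require Import all_boot all_order all_algebra.
From mathcomp Require Import reals.
Set Implicit Arguments. Unset Strict Implicit. Unset Printing Implicit Defensive.
Import Order.TTheory GRing.Theory Num.Theory.
Local Open Scope ring_scope.

(* A finite undirected (multi)graph is given by a node type N, an edge type Ed
   and the two endpoints eu f, ev f of every edge f. *)
Section Graphs.
Variables (N Ed : finType) (eu ev : Ed -> N).

Definition joins (f : Ed) (a b : N) : bool :=
  ((eu f == a) && (ev f == b)) || ((ev f == a) && (eu f == b)).

(* a walk from a to b: a list of steps (edge used, vertex reached) *)
Fixpoint is_walk (a b : N) (p : seq (Ed * N)) : bool :=
  match p with
  | [::] => a == b
  | s :: p' => joins s.1 a s.2 && is_walk s.2 b p'
  end.

Definition is_path (a b : N) (p : seq (Ed * N)) : bool :=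
  is_walk a b p && uniq (a :: map snd p).

Definition gconnected : Prop := forall a b : N, exists p, is_walk a b p.

Definition is_cycle (a : N) (p : seq (Ed * N)) : bool :=
  [&& (0 < size p)%N, is_walk a a p, uniq (map fst p) & uniq (map snd p)].

Definition acyclic : Prop := forall a p, ~~ is_cycle a p.

Definition is_tree : Prop := gconnected /\ acyclic.

Definition incident (u : N) : {set Ed} := [set f | (eu f == u) || (ev f == u)].

Definition is_leaf (u : N) : bool := (#|incident u| <= 1)%N.

Definition delta (X : {set N}) : {set Ed} :=
  [set f | (eu f \in X) != (ev f \in X)].

(* the vertex set of the component of eu f in the graph minus edge f *)
Definition side (f : Ed) : {set N} :=
  [set u | connect (fun a b => [exists g : Ed, (g != f) && joins g a b]) (eu f) u].

(* A-B flows in an undirected capacitated graph: g f is the (signed) amount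
   of flow along f in direction eu f -> ev f. *)
Variable R : realFieldType.

Definition netout (g : Ed -> R) (v : N) : R :=
  \sum_(f | eu f == v) g f - \sum_(f | ev f == v) g f.

Definition is_flow (cap : Ed -> R) (A B : {set N}) (g : Ed -> R) : Prop :=
  (forall f, `|g f| <= cap f) /\
  (forall v, v \notin A -> v \notin B -> netout g v = 0).

Definition flow_value (A : {set N}) (g : Ed -> R) : R := \sum_(v in A) netout g v.

Definition is_max_flow_value (cap : Ed -> R) (A B : {set N}) (val : R) : Prop :=
  (exists2 g, is_flow cap A B g & flow_value A g = val) /\
  (forall g, is_flow cap A B g -> flow_value A g <= val).

End Graphs.

Definition pair_edge_connected (V E : finType) (gu gv : E -> V) (El : {set E})
  (l : nat) (S T : {set V}) : Prop :=
  forall X : {set V}, T \subset X -> X \subset ~: S ->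
    (l <= #|delta gu gv X :&: El|)%N.

Record tree_embedding (V E : finType) (gu gv : E -> V) := TreeEmb {
  tnode : finType;
  tedge : finType;
  tu : tedge -> tnode;
  tv : tedge -> tnode;
  tmap : tnode -> V;
  tpath : tedge -> seq (E * V);
  te_tree : is_tree tu tv;
  te_leaf_inj : {in [pred u | is_leaf tu tv u] &, injective tmap};
  te_leaf_surj : forall v : V, exists2 u, is_leaf tu tv u & tmap u = v;
  te_path : forall f, is_path gu gv (tmap (tu f)) (tmap (tv f)) (tpath f)
}.

Arguments tu {V E gu gv} t _.
Arguments tv {V E gu gv} t _.
Arguments tmap {V E gu gv} t _.
Arguments tpath {V E gu gv} t _.

Section TreeEmb.
Variables (R : realFieldType) (V E : finType) (gu gv : E -> V).
Variable T : tree_embedding gu gv.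

Definition leafset (A : {set V}) : {set tnode T} :=
  [set u | is_leaf (tu T) (tv T) u && (tmap T u \in A)].

(* the leaf side X of the partition induced by T - f, as a vertex set of G *)
Definition te_X (f : tedge T) : {set V} :=
  [set v | [exists u, [&& u \in side (tu T) (tv T) f, is_leaf (tu T) (tv T) u
                        & tmap T u == v]]].

Definition te_y (xt : E -> R) (f : tedge T) : R :=
  \sum_(e in delta gu gv (te_X f)) xt e.

Definition Minv (e : E) : {set tedge T} := [set f | e \in map fst (tpath T f)].

Definition MinvS (F : {set E}) : {set tedge T} := \bigcup_(e in F) Minv e.

Definition load (xt : E -> R) (e : E) : R := \sum_(f in Minv e) te_y xt f.

Definition good (xt : E -> R) (F : {set E}) : bool :=
  \sum_(f in MinvS F) te_y xt f <= 1 / 2.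

End TreeEmb.

Definition LARGE (R : realFieldType) (E : finType) (x : E -> R) (l : nat) (beta : R)
  : {set E} := [set e | (4 * l%:R * beta)^-1 <= x e].

Definition xtilde (R : realFieldType) (V E : finType) (x : E -> R) (l : nat) (beta : R)
  (e : E) : R :=
  if e \in LARGE x l beta then (4 * l%:R * beta)^-1
  else if x e < (2 * (#|V|%:R) ^+ 2)^-1 * (4 * l%:R * beta)^-1 then 0
  else x e.

Arguments leafset {V E gu gv} T A.
Arguments te_X {V E gu gv} T f.
Arguments te_y {R V E gu gv} T xt f.
Arguments Minv {V E gu gv} T e.
Arguments MinvS {V E gu gv} T F.
Arguments load {R V E gu gv} T xt e.
Arguments good {R V E gu gv} T xt F.

From HB Require Import structures.
From mathcomp Require Import all_boot all_order all_algebra.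
From mathcomp Require Import reals.
From Stdlib Require List.
From mathcomp Require Import ring lra.
Import Order.TTheory GRing.Theory Num.Theory.
Local Open Scope ring_scope.

(* The tree edges using some edge of F carry total weight at most the sum of
   the loads of the edges of F.  Every edge of F is LARGE, so its capacity is
   1/(4 l beta); hence the expected load of F is at most l * beta / (4 l beta)
   = 1/4, and Markov's inequality bounds the probability that the weight
   exceeds 1/2 by 1/2. *)

Lemma sum_bigcup_le (R : numDomainType) (I T : finType) (F : {set I})
    (M : I -> {set T}) (y : T -> R) :
  (forall t, 0 <= y t) ->
  \sum_(t in \bigcup_(i in F) M i) y t <= \sum_(i in F) \sum_(t in M i) y t.
Proof.
move=> y_ge0; rewrite (exchange_big_dep predT) //= big_mkcond [leRHS]big_mkcond.
apply: ler_sum => t _; case: ifP => [/bigcupP[i iF tMi] | _]; last exact: sumr_ge0.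
rewrite (bigD1 i) /=; last by rewrite iF tMi.
by rewrite lerDl sumr_ge0.
Qed.

(* [exchange_big] cannot be used here: its index type lives in a universe
   too small for sequences of tree embeddings. *)
Lemma exchange_sum_seq_set (R : nmodType) (I : Type) (J : finType) (s : seq I)
    (A : {set J}) (F : I -> J -> R) :
  \sum_(i <- s) \sum_(j in A) F i j = \sum_(j in A) \sum_(i <- s) F i j.
Proof.
elim: s => [|i s IHs]; first by rewrite big_nil big1 // => j _; rewrite big_nil.
by rewrite big_cons IHs -big_split; apply: eq_bigr => j _; rewrite big_cons.
Qed.

Lemma markov_seq (R : numDomainType) (I : Type) (s : seq I) (w X : I -> R)
    (P : pred I) (a : R) :
  (forall i, List.In i s -> 0 <= w i) -> (forall i, 0 <= X i) ->
  (forall i, P i -> a <= X i) ->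
  a * \sum_(i <- s | P i) w i <= \sum_(i <- s) w i * X i.
Proof.
move=> + X_ge0 PX; elim: s => [|i s IHs] w_ge0; first by rewrite !big_nil mulr0.
have wi_ge0 : 0 <= w i by apply: w_ge0; left.
have {}IHs := IHs (fun j sj => w_ge0 j (or_intror sj)).
rewrite !big_cons; case: ifP => [Pi | _]; last by rewrite ler_wpDl ?mulr_ge0.
by rewrite mulrDr lerD // mulrC ler_wpM2l ?PX.
Qed.

Section TreeEmbeddingLoad.
Variables (R : realFieldType) (V E : finType) (gu gv : E -> V).
Variables (T : tree_embedding gu gv) (xt : E -> R).
Hypothesis xt_ge0 : forall e, 0 <= xt e.

Lemma te_y_ge0 f : 0 <= te_y T xt f.
Proof. exact: sumr_ge0. Qed.

Lemma load_ge0 e : 0 <= load T xt e.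
Proof. by apply: sumr_ge0 => f _; apply: te_y_ge0. Qed.

Lemma not_good_load_ge (F : {set E}) :
  ~~ good T xt F -> 1 / 2 <= \sum_(e in F) load T xt e.
Proof.
rewrite /good -ltNge => /ltW /le_trans; apply.
exact: sum_bigcup_le te_y_ge0.
Qed.

End TreeEmbeddingLoad.

Lemma xtilde_ge0 (R : realFieldType) (V E : finType) (x : E -> R) l beta e :
  (forall e, 0 <= x e) -> 0 <= beta -> 0 <= xtilde V x l beta e.
Proof.
move=> x_ge0 beta_ge0; rewrite /xtilde.
by case: ifP => _; [rewrite invr_ge0 !mulr_ge0 | case: ifP].
Qed.

Lemma sum_xtilde_LARGE (R : realFieldType) (V E : finType) (x : E -> R) l beta
    (F : {set E}) :
  (0 < l)%N -> beta != 0 -> F \subset LARGE x l beta -> #|F| = l ->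
  \sum_(e in F) xtilde V x l beta e = (4 * beta)^-1.
Proof.
move=> l_gt0 beta_neq0 FL cardF.
rewrite (eq_bigr (fun=> (4 * l%:R * beta)^-1)) => [|e eF]; last first.
  by rewrite /xtilde (subsetP FL e eF).
have l_neq0 : l%:R != 0 :> R by rewrite pnatr_eq0 -lt0n.
by rewrite sumr_const cardF -mulr_natr; field; rewrite beta_neq0 l_neq0.
Qed.

Theorem lemma5p2 (R : realType) (V E : finType) (gu gv : E -> V)
  (q : nat) (Ss Ts : 'I_q -> {set V}) (l : nat) (El : {set E})
  (x : E -> R) (beta : R) (D : seq (R * tree_embedding gu gv)) :
  (1 <= l)%N ->
  (forall i, pair_edge_connected gu gv El l (Ss i) (Ts i)) ->
  (forall e, 0 <= x e <= 1) ->
  (forall e, e \in El -> x e = 1) ->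
  (forall i (X : {set V}), Ts i \subset X -> X \subset ~: Ss i ->
      l%:R + 1 <= \sum_(e in delta gu gv X) x e) ->
  1 <= beta ->
  (* D is a (finitely supported) probability distribution *)
  (forall p, List.In p D -> 0 <= p.1) ->
  \sum_(p <- D) p.1 = 1 ->
  (forall e, \sum_(p <- D) p.1 * load p.2 (xtilde V x l beta) e
               <= beta * xtilde V x l beta e) ->
  (forall p, List.In p D -> 0 < p.1 ->
     forall A B : {set V}, [disjoint A & B] ->
     forall vT vG : R,
       is_max_flow_value (tu p.2) (tv p.2) (te_y p.2 (xtilde V x l beta))
         (leafset p.2 A) (leafset p.2 B) vT ->
       is_max_flow_value gu gv (xtilde V x l beta) A B vG ->
       vG <= vT) ->
  forall F : {set E}, F \subset LARGE x l beta -> #|F| = l ->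
    1 / 2 <= \sum_(p <- D | good p.2 (xtilde V x l beta) F) p.1.
Proof.
move=> l_gt0 _ x01 _ _ beta_ge1 D_ge0 D_sum1 D_load _ F FL cardF.
set xt := xtilde V x l beta.
have beta_gt0 : 0 < beta by apply: lt_le_trans beta_ge1.
have xt_ge0 e : 0 <= xt e.
  by apply: xtilde_ge0 (ltW beta_gt0) => e'; case/andP: (x01 e').
pose loadF (T : tree_embedding gu gv) := \sum_(e in F) load T xt e.
have expected_loadF : \sum_(p <- D) p.1 * loadF p.2 <= 1 / 4.
  rewrite /loadF; under eq_bigr do rewrite mulr_sumr.
  rewrite exchange_sum_seq_set; apply: le_trans (ler_sum _ (fun e _ => D_load e)) _.
  rewrite -mulr_sumr sum_xtilde_LARGE ?gt_eqF //.
  by rewrite [leLHS](_ : _ = 1 / 4) //; field; rewrite gt_eqF.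
have bad_le : 1 / 2 * \sum_(p <- D | ~~ good p.2 xt F) p.1 <= 1 / 4.
  apply: le_trans expected_loadF; apply: markov_seq => // [T | p].
    by apply: sumr_ge0 => e _; apply: load_ge0.
  exact: not_good_load_ge.
move: D_sum1; rewrite (bigID (fun p => good p.2 xt F)) /=.
lra.
Qed.
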